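(* Let $G_1$ and $G_2$ be two vertex-disjoint 2-edge-colored graphs with Hamiltonian alternating cycles $C_1=x_0x_1\cdots x_{2n-1}x_0$ and $C_2=y_0y_1\cdots y_{2m-1}y_0$, respectively, and let $G\in G_1\oplus G_2$. Suppose there is no good pair in $G$ (between $C_1$ and $C_2$), and that for each $i\in\{1,2\}$ there is a vertex of $C_i$ which is non-singular with respect to $C_{3-i}$. Then $G$ is vertex alternating-pancyclic.
   Context: All graphs are simple, with edges colored red or blue. An alternating cycle is a cycle in which consecutive edges have different colors; a Hamiltonian alternating cycle of a graph is an alternating cycle through all its vertices. A 2-edge-colored graph of order $2N$ is vertex alternating-pancyclic if for every vertex $v$ and every $k\in\{2,\dots,N\}$ it contains an alternating cycle of length $2k$ through $v$. For vertex-disjoint 2-edge-colored graphs $G_1,G_2$, the colored generalized sum $G_1\oplus G_2$ is the set of 2-edge-colored graphs $G$ with $V(G)=V(G_1)\cup V(G_2)$, $G\langle V(G_i)\rangle=G_i$ with the same coloring, and exactly one edge (of arbitrary fixed color) between each $u\in V(G_1)$ and $w\in V(G_2)$; these latter edges are the exterior edges. For $v$ on an alternating cycle $C$, $v^r$ (resp. $v^b$) is the neighbor of $v$ on $C$ with $vv^r$ red (resp. $vv^b$ blue). For an exterior edge $vw$ with $v\in V(C_1)$, $w\in V(C_2)$: if $vw$ is red, $vw,v^rw^r$ is a good pair if $v^rw^r$ is red; if $vw$ is blue, $vw,v^bw^b$ is a good pair if $v^bw^b$ is blue. A vertex $v\in V(C_i)$ is singular with respect to $C_{3-i}$ if all edges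 between $v$ and $V(C_{3-i})$ have the same color, and non-singular otherwise. *)

From mathcomp Require Import all_boot.
Set Implicit Arguments. Unset Strict Implicit. Unset Printing Implicit Defensive.

(* A 2-edge-colored simple graph on a finite vertex type V is given by an
   adjacency relation [adj] (assumed symmetric and irreflexive) and a colouring
   [col] of pairs (assumed symmetric); [col x y = true] means the edge xy is red,
   [false] means blue. *)
Section AltCycles.
Variables (V : finType) (adj : rel V) (col : V -> V -> bool).

Definition simple_2ec_graph : Prop :=
  irreflexive adj /\ symmetric adj /\ (forall x y, col x y = col y x).

Definition alt_cycle (s : seq V) : bool :=
  [&& s != [::], uniq s, cycle adj s &
      all (fun x => col (prev s x) x != col x (next s x)) s].

Definition vertex_alt_pancyclic : Prop :=
  forall (v : V) (k : nat), 2 <= k -> 2 * k <= #|V| ->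
    exists s : seq V, [/\ alt_cycle s, size s = 2 * k & v \in s].

(* v^c for v on the cycle s: the neighbour of v on s joined to v by an edge
   of colour c (v^r for c = true, v^b for c = false). *)
Definition cnbr (s : seq V) (c : bool) (v : V) : V :=
  if col v (next s v) == c then next s v else prev s v.

Definition has_good_pair (C1 C2 : seq V) : Prop :=
  exists v w, [/\ v \in C1, w \in C2 &
    col (cnbr C1 (col v w) v) (cnbr C2 (col v w) w) = col v w].

Definition non_singular (v : V) (C : seq V) : Prop :=
  exists w1 w2, [/\ w1 \in C, w2 \in C & col v w1 != col v w2].

End AltCycles.

(* Number C1 = x_0 ... x_{2n-1} and C2 = y_0 ... y_{2m-1} so that x_i x_{i+1}
   and y_j y_{j+1} are red exactly for even i, j, and twist the colour of x_i y_j
   by the parity of i.  The absence of good pairs, applied along the orbit of the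
   composite "blue neighbour, then red neighbour", forces the twisted colour to be
   constant along the diagonals i + j = const of odd sum and i - j = const of even
   sum.  If it is constant on both families of diagonals, all edges at a vertex
   of C1 or at a vertex of C2 have the same colour, against non-singularity;
   reversing C2 if necessary, it is therefore a non-constant function h of the
   odd sum i + j, periodic of period 2 gcd(n, m), so h has both a true-to-false
   and a false-to-true step.  The cycle x_c ... x_{c+p-1} y_b ... y_{b+q-1} is
   alternating as soon as h(c + p - 1 + b) is true and h(c + b + q - 1) is false,
   and a true-to-false step realises every length 2k < 2(n + m); the Hamiltonian
   cycle x_0 x_1 y_b ... x_2 ... x_{2n-1} ... uses both kinds of steps. *)

From mathcomp Require Import all_boot zify.
From Stdlib Require Import Classical.
Set Implicit Arguments. Unset Strict Implicit. Unset Printing Implicit Defensive.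

Lemma next_nth_mod (T : eqType) (x0 : T) (s : seq T) i :
  uniq s -> i < size s -> next s (nth x0 s i) = nth x0 s (i.+1 %% size s).
Proof.
move=> us ltis; rewrite next_nth mem_nth // index_uniq //.
case: s us ltis => [|y p] //= us ltis.
rewrite ltnS leq_eqVlt in ltis; case/orP: ltis => [/eqP ->|lt].
  by rewrite modnn /= nth_default.
by rewrite modn_small ?ltnS //= (set_nth_default x0).
Qed.

Lemma prev_nth_mod (T : eqType) (x0 : T) (s : seq T) i :
  uniq s -> i < size s ->
  prev s (nth x0 s i) = nth x0 s ((i + (size s).-1) %% size s).
Proof.
move=> us ltis; rewrite prev_nth mem_nth //.
case: s us ltis => [|y p] //= /andP[ynp up] ltis.
case: i ltis => [|j] ltis /=.
  by rewrite add0n modn_small // memNindex // (set_nth_default x0).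
rewrite ltnS in ltis.
rewrite index_uniq // addSn -addnS modnDr modn_small; last exact: ltnW.
by rewrite (set_nth_default x0) //= ltnW.
Qed.

Lemma card_cover2 (T : finType) (s1 s2 : seq T) :
  uniq s1 -> uniq s2 -> [disjoint s1 & s2] ->
  (forall x, (x \in s1) || (x \in s2)) -> #|T| = size s1 + size s2.
Proof.
move=> u1 u2 disj cov; rewrite cardE -size_cat; apply/perm_size/uniq_perm.
- exact: enum_uniq.
- by rewrite cat_uniq u1 u2 -disjoint_has disjoint_sym disj.
- by move=> x; rewrite mem_enum mem_cat cov.
Qed.

(* With x_i x_{i+1} red exactly for even i, these are the indices of the red and
   blue neighbours of x_i on a cycle of length N; N.-1 stands for -1 modulo N. *)
Definition red_idx N x := if odd x then x + N.-1 else x.+1.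
Definition blue_idx N x := if odd x then x.+1 else x + N.-1.

Lemma iter_parity_shift (g : nat -> nat) a b :
  ~~ odd a -> ~~ odd b -> (forall x, g x = x + (if odd x then a else b)) ->
  forall t i, iter t g i = i + (if odd i then a else b) * t.
Proof.
move=> ea eb gE; elim=> [|t IH] i /=; first by rewrite muln0 addn0.
rewrite IH gE; case: ifP => oi; rewrite oddD oddM oi ?(negbTE ea) ?(negbTE eb) /=; lia.
Qed.

Lemma red_blue_closes n m i : 0 < n -> 0 < m -> exists t,
  blue_idx (2 * n) (iter (n * m).-1 (fun x => red_idx (2 * n) (blue_idx (2 * n) x)) i)
  = red_idx (2 * n) i + 2 * n * t.
Proof.
move=> n0 m0; rewrite (@iter_parity_shift _ 2 (4 * n - 2)); first last.
- by move=> x; rewrite /red_idx /blue_idx; case ox: (odd x); [rewrite ifF | rewrite ifT]; lia.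
- lia.
- by [].
rewrite /red_idx /blue_idx; case oi: (odd i).
  exists m.-1; rewrite ifT; nia.
exists (2 * n * m - m - 1); rewrite ifF; nia.
Qed.

Lemma blue_red_closes n m i : 0 < n -> 0 < m -> exists t,
  red_idx (2 * n) (iter (n * m).-1 (fun x => blue_idx (2 * n) (red_idx (2 * n) x)) i)
  = blue_idx (2 * n) i + 2 * n * t.
Proof.
move=> n0 m0; rewrite (@iter_parity_shift _ (4 * n - 2) 2); first last.
- by move=> x; rewrite /red_idx /blue_idx; case ox: (odd x); [rewrite ifF | rewrite ifT]; lia.
- by [].
- lia.
rewrite /red_idx /blue_idx; case oi: (odd i).
  exists (2 * n * m - m - 1); rewrite ifT; nia.
exists m.-1; rewrite ifF; nia.
Qed.

Lemma flip_of_no_good_pair (f : nat -> nat -> bool) n m (rX bX rY bY : nat -> nat) :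
  (forall i j t u, f (i + 2 * n * t) (j + 2 * m * u) = f i j) ->
  (forall i, exists t,
     bX (iter (n * m).-1 (fun x => rX (bX x)) i) = rX i + 2 * n * t) ->
  (forall j, exists u,
     bY (iter (n * m).-1 (fun y => rY (bY y)) j) = rY j + 2 * m * u) ->
  (forall i j, f i j -> ~~ f (rX i) (rY j)) ->
  (forall i j, ~~ f i j -> f (bX i) (bY j)) ->
  forall i j, f (rX i) (rY j) = ~~ f i j.
Proof.
move=> fP closeX closeY R1 R2 i j; case fij: (f i j); first exact/negbTE/R1.
(* Applying R2 then R1 keeps f false along the orbit of (i, j) under "blue,
   then red"; a blue step after (n * m).-1 rounds lands on (rX i, rY j). *)
have W t : ~~ f (iter t (fun x => rX (bX x)) i) (iter t (fun y => rY (bY y)) j).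
  by elim: t => [|t IH] /=; [rewrite fij | apply/R1/R2].
have [t et] := closeX i; have [u eu] := closeY j.
by have := R2 _ _ (W (n * m).-1); rewrite et eu fP.
Qed.

Definition skew (f : nat -> nat -> bool) i j := f i j (+) odd i.

Definition sum_invariant f := forall i j, ~~ odd (i + j) -> skew f i j.+1 = skew f i.+1 j.
Definition diff_invariant f := forall i j, ~~ odd (i + j) -> skew f i.+1 j.+1 = skew f i j.

Lemma diagonal_invariants (f : nat -> nat -> bool) n m :
  0 < n -> 0 < m ->
  (forall i j t u, f (i + 2 * n * t) (j + 2 * m * u) = f i j) ->
  (forall i j, f i j -> ~~ f (red_idx (2 * n) i) (red_idx (2 * m) j)) ->
  (forall i j, ~~ f i j -> f (blue_idx (2 * n) i) (blue_idx (2 * m) j)) ->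
  sum_invariant f /\ diff_invariant f.
Proof.
move=> n0 m0 fP R1 R2.
have red_flip i j : f (red_idx (2 * n) i) (red_idx (2 * m) j) = ~~ f i j.
  apply: (flip_of_no_good_pair fP _ _ R1 R2) => [{}i|{}j].
    exact: red_blue_closes.
  by rewrite [n * m]mulnC; apply: red_blue_closes.
have blue_flip i j : f (blue_idx (2 * n) i) (blue_idx (2 * m) j) = ~~ f i j.
  apply: negb_inj.
  apply: (@flip_of_no_good_pair (fun i j => ~~ f i j) n m _ (red_idx (2 * n)) _
    (red_idx (2 * m))) => [{}i {}j t u|{}i|{}j|{}i {}j|{}i {}j].
  - by rewrite fP.
  - exact: blue_red_closes.
  - by rewrite [n * m]mulnC; apply: blue_red_closes.
  - by move/R2; rewrite negbK.
  - by rewrite negbK; apply: R1.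
have fPj i j : f i (j + 2 * m) = f i j by have := fP i j 0 1; rewrite muln0 addn0 muln1.
split=> i j e; rewrite /skew; case oi: (odd i).
- have := blue_flip i j.+1; rewrite /blue_idx oi ifF; last by lia.
  by rewrite (_ : j.+1 + _ = j + 2 * m) ?fPj => [->|]; [rewrite oddS oi; case: (f _ _) | lia].
- have := red_flip i j.+1; rewrite /red_idx oi ifT; last by lia.
  by rewrite (_ : j.+1 + _ = j + 2 * m) ?fPj => [->|]; [rewrite oddS oi; case: (f _ _) | lia].
- have := blue_flip i j; rewrite /blue_idx oi ifT; last by lia.
  by move=> ->; rewrite oddS oi; case: (f _ _).
- have := red_flip i j; rewrite /red_idx oi ifF; last by lia.
  by move=> ->; rewrite oddS oi; case: (f _ _).
Qed.

Definition skew_nonconst (f : nat -> nat -> bool) (p : bool) :=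
  exists i j i' j',
    [/\ odd (i + j) = p, odd (i' + j') = p & skew f i j != skew f i' j'].

Lemma skew_const_or_singular f :
  ~ skew_nonconst f true -> ~ skew_nonconst f false ->
  (forall i j j', f i j = f i j') \/ (forall i i' j, f i j = f i' j).
Proof.
move=> const_odd const_even.
have skewE i j : skew f i j = skew f (odd (i + j)) 0.
  apply/eqP/negPn/negP => ne; case oij: (odd (i + j)) in ne.
  - by apply: const_odd; exists i, j, 1, 0; rewrite oij.
  - by apply: const_even; exists i, j, 0, 0; rewrite oij.
have fE i j : f i j = skew f (odd (i + j)) 0 (+) odd i.
  by rewrite -skewE /skew addbK.
case: (boolP (skew f 1 0 == skew f 0 0)) => [/eqP same|diff]; [left|right].
  by move=> i j j'; rewrite !fE; case: (odd (i + j)); case: (odd (i + j')); rewrite ?same.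
move=> i i' j; rewrite !fE !oddD.
by move: diff; case: (odd i); case: (odd i'); case: (odd j); case: (skew f 1 0);
  case: (skew f 0 0).
Qed.

(* j |-> 1 - j modulo 2m: the same cycle traversed backwards. *)
Definition rev_idx m j := (2 * m).-1 * j + 1.

Lemma rev_idxK m j : 0 < m -> rev_idx m (rev_idx m j) = j + 2 * m * (2 * m.-1 * j + 1).
Proof. by move=> m0; rewrite /rev_idx (_ : (2 * m).-1 = 2 * m.-1 + 1); nia. Qed.

Lemma skew_nonconst_swap f f' :
  (forall i j, f' i j = f j i) -> skew_nonconst f true -> skew_nonconst f' true.
Proof.
move=> f'E [i [j [i' [j' [oij oij' ne]]]]].
exists j, i, j', i'; rewrite !(addnC j) !(addnC j') /skew !f'E; split=> //.
by move: ne; rewrite /skew !oddD in oij oij' *; move: oij oij';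
  case: (odd i); case: (odd j); case: (odd i'); case: (odd j');
  case: (f i j); case: (f i' j').
Qed.

Lemma sum_invariant_swap f f' :
  (forall i j, f' i j = f j i) -> sum_invariant f -> sum_invariant f'.
Proof.
move=> f'E inv i j e; have := inv j i; rewrite addnC => /(_ e).
rewrite /skew !f'E !oddS; move: e; rewrite oddD.
by case: (odd i); case: (odd j); case: (f _ _); case: (f _ _).
Qed.

Section Reversal.
Variables (m : nat) (f : nat -> nat -> bool).
Hypothesis m_gt0 : 0 < m.
Hypothesis f_periodic : forall i j u, f i (j + 2 * m * u) = f i j.

Lemma odd_pred_double_mul j : odd ((2 * m).-1 * j) = odd j.
Proof. by rewrite oddM (_ : odd (2 * m).-1) //; lia. Qed.

Lemma periodic_rev_idxK i j : f i (rev_idx m (rev_idx m j)) = f i j.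
Proof. by rewrite rev_idxK // f_periodic. Qed.

Lemma sum_invariant_rev :
  diff_invariant f -> sum_invariant (fun i j => f i (rev_idx m j)).
Proof.
move=> inv i j e; rewrite /skew.
have -> : rev_idx m j.+1 = (2 * m).-1 * j + 2 * m * 1 by rewrite /rev_idx; lia.
rewrite f_periodic /rev_idx addn1.
have := inv i ((2 * m).-1 * j); rewrite /skew oddD odd_pred_double_mul -oddD.
by move=> /(_ e) <-; rewrite !oddS; case: (f _ _); case: (odd i).
Qed.

Lemma skew_nonconst_rev :
  skew_nonconst f false -> skew_nonconst (fun i j => f i (rev_idx m j)) true.
Proof.
have odd_rev j : odd (rev_idx m j) = ~~ odd j.
  by rewrite /rev_idx addn1 oddS odd_pred_double_mul.
case=> i [j [i' [j' [oij oij' ne]]]].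
exists i, (rev_idx m j), i', (rev_idx m j'); rewrite /skew !periodic_rev_idxK.
by split=> //; rewrite oddD odd_rev addbN -oddD ?oij ?oij'.
Qed.

End Reversal.

Lemma odd_periodicM (h : nat -> bool) p :
  (forall s, odd s -> h (s + 2 * p) = h s) ->
  forall t s, odd s -> h (s + 2 * p * t) = h s.
Proof.
move=> hP; elim=> [|t IH] s os; first by rewrite muln0 addn0.
by rewrite mulnS addnCA addnC hP ?IH //; lia.
Qed.

Lemma odd_periodic_drop (h : nat -> bool) p s1 s2 :
  0 < p -> (forall s, odd s -> h (s + 2 * p) = h s) ->
  odd s1 -> odd s2 -> h s1 -> ~~ h s2 ->
  exists s, [/\ odd s, h s & ~~ h (s + 2)].
Proof.
move=> p0 hP o1 o2 h1 h2.
suff [t ht] : exists t, h (s1 + 2 * t) = false.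
  elim: t ht => [|t IH]; first by rewrite muln0 addn0 h1.
  case e: (h (s1 + 2 * t)) => hn; last exact: IH.
  by exists (s1 + 2 * t); rewrite -addnA -mulnSr hn e; split=> //; lia.
have s1p : s1 <= p * s1 by rewrite leq_pmull.
exists ((s2 + 2 * p * s1 - s1) %/ 2).
by rewrite (_ : s1 + _ = s2 + 2 * p * s1) ?odd_periodicM ?(negbTE h2) //; lia.
Qed.

Lemma split_length n m k : 1 < n -> 1 < m -> 1 < k -> k < n + m ->
  exists p q u v, [/\ 0 < p <= 2 * n, 0 < q <= 2 * m, p + q = 2 * k &
     q + 2 * gcdn n m * u = p + 2 + 2 * gcdn n m * v].
Proof.
move=> n1 m1 k1 km; set g := gcdn n m.
have g0 : 0 < g by rewrite gcdn_gt0; lia.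
have [n' en] : exists n', n = n' * g by exists (n %/ g); rewrite divnK // dvdn_gcdl.
have [m' em] : exists m', m = m' * g by exists (m %/ g); rewrite divnK // dvdn_gcdr.
have gn : g <= n by apply: dvdn_leq; [lia | apply: dvdn_gcdl].
have gm : g <= m by apply: dvdn_leq; [lia | apply: dvdn_gcdr].
set r := n + m - 1 - k.
case: (leqP (2 * m) k) => hkm.
  set r0 := r %% g; set r1 := r %/ g.
  have er : r = r1 * g + r0 by apply: divn_eq.
  have r0g : r0 < g by rewrite ltn_mod.
  have r0r : r0 <= r by apply: leq_mod.
  by exists (2 * k - (2 * m - r0)), (2 * m - r0), n', (m' + r1); split; lia.
case: (leqP (2 * n + 2) k) => hkn.
  set r0 := (r + 2) %% g; set r1 := (r + 2) %/ g.
  have er : r + 2 = r1 * g + r0 by apply: divn_eq.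
  have r0g : r0 < g by rewrite ltn_mod.
  have r0r : r0 <= r + 2 by apply: leq_mod.
  by exists (2 * n - r0), (2 * k - (2 * n - r0)), (n' + r1), m'; split; lia.
by exists k.-1, k.+1, 0, 0; split; lia.
Qed.

Section AltCycles.
Variables (V : finType) (adj : rel V) (col : V -> V -> bool).
Hypothesis adjC : symmetric adj.
Hypothesis colC : forall x y, col x y = col y x.

Lemma alt_cycle_nthP (s : seq V) (x0 : V) :
  alt_cycle adj col s <->
  [/\ s != [::], uniq s,
      forall i, i < size s -> adj (nth x0 s i) (nth x0 s (i.+1 %% size s)) &
      forall i, i < size s ->
        col (nth x0 s ((i + (size s).-1) %% size s)) (nth x0 s i)
        != col (nth x0 s i) (nth x0 s (i.+1 %% size s))].
Proof.
rewrite /alt_cycle; split.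
  case/and4P=> sn us cs als; split=> // i lti.
    by rewrite -next_nth_mod //; apply: next_cycle cs _; apply: mem_nth.
  rewrite -next_nth_mod // -prev_nth_mod //.
  by move/all_nthP: als => /(_ x0 i lti).
case=> sn us ha hc; apply/and4P; split=> //.
  case: s sn us ha hc => [|y p] //= _ us ha hc.
  apply/(pathP x0) => i; rewrite size_rcons => lti.
  have := ha i lti; rewrite -rcons_cons !nth_rcons /= lti.
  rewrite ltnS leq_eqVlt in lti; case/orP: lti => [/eqP ->|lt].
    by rewrite modnn ltnn eqxx.
  by rewrite modn_small ?ltnS // lt.
apply/(all_nthP x0) => i lti.
by rewrite next_nth_mod // prev_nth_mod // hc.
Qed.

Lemma alt_cycle_mkseq (z : nat -> V) L beta :
  ~~ odd L -> 0 < L -> {in gtn L &, injective z} ->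
  (forall i, i.+1 < L ->
     adj (z i) (z i.+1) /\ col (z i) (z i.+1) = odd i (+) beta) ->
  adj (z L.-1) (z 0) -> col (z L.-1) (z 0) = ~~ beta ->
  alt_cycle adj col (mkseq z L).
Proof.
move=> eL L0 zi inner adj_last col_last.
have edge i : i < L ->
    adj (z i) (z (i.+1 %% L)) /\ col (z i) (z (i.+1 %% L)) = odd i (+) beta.
  move=> ltiL; have [iL|iL] := eqVneq i.+1 L.
    have -> : i = L.-1 by lia.
    by rewrite prednK // modnn col_last (_ : odd L.-1); lia.
  by rewrite modn_small; [apply: inner | ]; lia.
apply/(alt_cycle_nthP _ (z 0)); rewrite size_mkseq.
have zE i : i < L -> nth (z 0) (mkseq z L) i = z i by apply: nth_mkseq.
split.
- by rewrite -size_eq0 size_mkseq -lt0n.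
- exact/mkseq_uniqP.
- by move=> i lti; rewrite !zE ?ltn_pmod //; apply: (edge i lti).1.
move=> i lti; set j := (i + L.-1) %% L.
have ltj : j < L by rewrite ltn_pmod.
have ej : j.+1 %% L = i.
  by rewrite /j -addn1 modnDml -addnA addn1 prednK // modnDr modn_small.
rewrite !zE ?ltn_pmod //; have := (edge j ltj).2; rewrite ej => ->.
rewrite (edge i lti).2; have : odd j != odd i.
  rewrite /j; case: i lti {ej ltj j} => [|i] lti.
    by rewrite add0n modn_small; lia.
  by rewrite addSn -addnS prednK // modnDr modn_small; lia.
by case: (odd i); case: (odd j); case: (beta).
Qed.

Lemma alt_cycle_col_parity s x0 (N := size s) :
  alt_cycle adj col s ->
  ~~ odd N /\ forall i, i < N ->
    col (nth x0 s i) (nth x0 s (i.+1 %% N))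
    = col (nth x0 s 0) (nth x0 s (1 %% N)) (+) odd i.
Proof.
case/(alt_cycle_nthP _ x0)=> sn _ _ alt; rewrite -/N in alt.
have N0 : 0 < N by rewrite lt0n size_eq0.
pose ec i := col (nth x0 s i) (nth x0 s (i.+1 %% N)).
have ecS i : i.+1 < N -> ec i.+1 = ~~ ec i.
  move=> ltiN; have := alt i.+1 ltiN.
  rewrite addSn -addnS prednK // modnDr modn_small 1?ltnW //.
  rewrite /ec (modn_small ltiN).
  by case: (col (nth x0 s i) _); case: (col (nth x0 s i.+1) _).
have ecE i : i < N -> ec i = ec 0 (+) odd i.
  elim: i => [|i IH] ltiN; first by rewrite addbF.
  by rewrite ecS // IH 1?ltnW // oddS addbN.
split=> //; have : ec N.-1 != ec 0.
  by have := alt 0 N0; rewrite /ec prednK // modnn add0n modn_small ?ltn_predL.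
rewrite [ec N.-1]ecE ?ltn_predL //.
by case: (N) N0 => // N' _ /=; case: (odd N'); case: (ec 0).
Qed.

Record alt_param (n : nat) (X : nat -> V) : Prop := AltParam {
  alt_param_gt1 : 1 < n;
  alt_param_periodic : forall i, X (i + 2 * n) = X i;
  alt_param_inj : forall i j, X i = X j -> i = j %[mod 2 * n];
  alt_param_adj : forall i, adj (X i) (X i.+1);
  alt_param_col : forall i, col (X i) (X i.+1) = ~~ odd i }.

Lemma alt_param_of_cycle s :
  alt_cycle adj col s ->
  exists n X, [/\ alt_param n X, size s = 2 * n,
    forall i, X i \in s,
    forall v, v \in s -> exists i, X i = v &
    forall i, next s (X i) = X i.+1 /\ prev s (X i) = X (i + (2 * n).-1)].
Proof.
move=> A; have [x0 _] : exists x0 : V, x0 \in s.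
  by case/and4P: A; case: s => // x s' _ _ _ _; exists x; rewrite mem_head.
have [N_even ecE] := alt_cycle_col_parity x0 A.
have [sn us adjs _] := (alt_cycle_nthP s x0).1 A.
set N := size s in N_even ecE adjs.
have N0 : 0 < N by rewrite lt0n size_eq0.
have N_gt2 : 2 < N.
  have N_neq2 : N != 2.
    apply/eqP => N2; have := ecE 1; rewrite N2 modnn modn_small // => /(_ isT).
    by rewrite colC; case: (col _ _).
  by move: N0 N_even N_neq2; case: (N) => [|[|[|]]].
set r := col (nth x0 s 0) (nth x0 s (1 %% N)) in ecE.
(* Start at the second vertex when the first edge is blue. *)
pose X i := nth x0 s ((i + ~~ r) %% N).
have XS i : X i.+1 = nth x0 s (((i + ~~ r) %% N).+1 %% N).
  by rewrite /X -[((_ %% N).+1)]addn1 modnDml addn1 addSn.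
have ltN i : (i + ~~ r) %% N < N by rewrite ltn_pmod.
have eN : 2 * N./2 = N by lia.
exists N./2, X; rewrite eN.
split.
- constructor; rewrite ?eN.
  + by lia.
  + by move=> i; rewrite /X -addnA [N + _]addnC addnA modnDr.
  + by move=> i j; rewrite /X => /eqP; rewrite nth_uniq // eqn_modDr => /eqP.
  + by move=> i; rewrite XS; apply: adjs.
  + move=> i; rewrite XS ecE // odd_mod ?(negbTE N_even) // oddD.
    by case: (r); case: (odd i).
- by [].
- by move=> i; rewrite mem_nth.
- move=> v vs; exists (index v s + (N - ~~ r)).
  rewrite /X -addnA subnK; last by case: (r); rewrite ?subn0 ?subn1 ?leq_pred.
  by rewrite modnDr modn_small ?index_mem // nth_index.
move=> i; rewrite /X next_nth_mod // prev_nth_mod // -XS; split=> //.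
by rewrite -/N modnDml addnAC.
Qed.

Section Param.
Variables (n : nat) (X : nat -> V).
Hypothesis pX : alt_param n X.

Lemma alt_param_periodicM i t : X (i + 2 * n * t) = X i.
Proof.
elim: t => [|t IH]; first by rewrite muln0 addn0.
by rewrite mulnS addnCA addnC (alt_param_periodic pX).
Qed.

Lemma alt_param_mod i : X (i %% (2 * n)) = X i.
Proof. by rewrite {2}(divn_eq i (2 * n)) addnC [_ %/ _ * _]mulnC alt_param_periodicM. Qed.

Lemma cnbr_alt_param s c i :
  (forall i, next s (X i) = X i.+1 /\ prev s (X i) = X (i + (2 * n).-1)) ->
  cnbr col s c (X i) = X (if c then red_idx (2 * n) i else blue_idx (2 * n) i).
Proof.
move=> /(_ i) [nextX prevX].
rewrite /cnbr nextX prevX (alt_param_col pX) /red_idx /blue_idx.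
by case: c; case: (odd i).
Qed.

Lemma alt_param_rev : alt_param n (fun j => X (rev_idx n j)).
Proof.
have n1 := alt_param_gt1 pX.
have e1 : (2 * n).-1 = 2 * n.-1 + 1 by lia.
have revS j : X (rev_idx n j.+1) = X ((2 * n).-1 * j).
  by rewrite /rev_idx -[RHS](alt_param_periodic pX); congr X; rewrite e1; lia.
split=> //.
- move=> i; rewrite /rev_idx -[RHS](alt_param_periodicM _ (2 * n).-1).
  by congr X; rewrite e1; lia.
- move=> i j /(alt_param_inj pX) /eqP e; apply/eqP.
  have h1 : rev_idx n i + (i + j) = i * (2 * n) + j.+1 by rewrite /rev_idx e1; lia.
  have h2 : rev_idx n j + (i + j) = j * (2 * n) + i.+1 by rewrite /rev_idx e1; lia.
  move: e; rewrite -(eqn_modDr (i + j)) h1 h2 !modnMDl.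
  by rewrite -[j.+1]addn1 -[i.+1]addn1 eqn_modDr eq_sym.
- by move=> j; rewrite revS adjC /rev_idx addn1; apply: (alt_param_adj pX).
- move=> j; rewrite revS colC /rev_idx addn1 (alt_param_col pX).
  by rewrite oddM (_ : odd (2 * n).-1) //; lia.
Qed.

End Param.

Lemma non_singular_param (s1 s2 : seq V) (X Y : nat -> V) v :
  (forall u, u \in s1 -> exists i, X i = u) -> (forall w, w \in s2 -> exists j, Y j = w) ->
  v \in s1 -> non_singular col v s2 -> exists i j j', col (X i) (Y j) != col (X i) (Y j').
Proof.
move=> Xonto Yonto vs1 [w [w' [ws2 w's2]]]; have [i <-] := Xonto v vs1.
by have [j <-] := Yonto w ws2; have [j' <-] := Yonto w' w's2; exists i, j, j'.
Qed.

Section TwoCycles.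
Variables (n m : nat) (X Y : nat -> V).
Hypotheses (pX : alt_param n X) (pY : alt_param m Y).
Hypothesis XY_neq : forall i j, X i != Y j.
Hypothesis XY_adj : forall i j, adj (X i) (Y j).

Ltac solve_inj :=
  match goal with
  | |- X _ = X _ -> _ =>
      move/(alt_param_inj pX)/eqP; rewrite ?eqn_modDl !modn_small; lia
  | |- Y _ = Y _ -> _ =>
      move/(alt_param_inj pY)/eqP; rewrite ?eqn_modDl !modn_small; lia
  | |- X ?a = Y ?b -> _ => by move=> /eqP; rewrite (negbTE (XY_neq a b))
  | |- Y ?a = X ?b -> _ => by move=> /esym/eqP; rewrite (negbTE (XY_neq b a))
  end.

Ltac solve_adj :=
  match goal with
  | |- is_true (adj (X ?a) (X ?b)) =>
      first [exact: (alt_param_adj pX)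
            | rewrite (_ : b = a.+1); [exact: (alt_param_adj pX) | lia]]
  | |- is_true (adj (Y ?a) (Y ?b)) =>
      first [exact: (alt_param_adj pY)
            | rewrite (_ : b = a.+1); [exact: (alt_param_adj pY) | lia]]
  | |- is_true (adj (X _) (Y _)) => exact: XY_adj
  | |- is_true (adj (Y _) (X _)) => rewrite adjC; exact: XY_adj
  end.

Ltac solve_col :=
  match goal with
  | |- col (X ?a) (X ?b) = _ =>
      first [rewrite (alt_param_col pX); lia
            | rewrite (_ : b = a.+1) ?(alt_param_col pX); lia]
  | |- col (Y ?a) (Y ?b) = _ =>
      first [rewrite (alt_param_col pY); lia
            | rewrite (_ : b = a.+1) ?(alt_param_col pY); lia]
  | H : col (X ?a') (Y ?b') = _ |- col (X ?a) (Y ?b) = _ =>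
      rewrite (_ : col (X a) (Y b) = col (X a') (Y b'));
      [rewrite H; lia | congr (col (X _) (Y _)); lia]
  | H : col (X ?a') (Y ?b') = _ |- col (Y ?b) (X ?a) = _ =>
      rewrite colC (_ : col (X a) (Y b) = col (X a') (Y b'));
      [rewrite H; lia | congr (col (X _) (Y _)); lia]
  end.

Definition two_seg c b p i := if i < p then X (c + i) else Y (b + (i - p)).

Lemma two_seg_alt_cycle c b p q :
  0 < p <= 2 * n -> 0 < q <= 2 * m ->
  odd (c + p.-1 + b) -> col (X (c + p.-1)) (Y b) = ~~ odd (c + p.-1) ->
  odd (c + (b + q.-1)) -> col (X c) (Y (b + q.-1)) = odd c ->
  alt_cycle adj col (mkseq (two_seg c b p) (p + q)).
Proof.
move=> /andP[p0 pn] /andP[q0 qm] o1 c1 o2 c2.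
apply: (alt_cycle_mkseq (beta := ~~ odd c)); rewrite /two_seg.
- lia.
- lia.
- by move=> i j; rewrite !inE => li lj; repeat case: ifP => ?; solve_inj.
- by move=> i li; repeat case: ifP => ?; try lia; split; first [solve_adj | solve_col].
- by repeat case: ifP => ?; try lia; solve_adj.
- by repeat case: ifP => ?; try lia; solve_col.
Qed.

Definition ham_seg b q i :=
  if i < 2 then X i else if i < 2 + q then Y (b + (i - 2))
  else if i < 2 * n + q then X (i - q) else Y (b + (i - 2 * n)).

Lemma ham_seg_alt_cycle b q :
  ~~ odd b -> ~~ odd q -> 2 <= q <= 2 * m - 2 ->
  col (X 1) (Y b) = false -> col (X 2) (Y (b + q.-1)) = false ->
  col (X (2 * n).-1) (Y (b + q)) = false -> col (X 0) (Y (b + (2 * m).-1)) = false ->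
  alt_cycle adj col (mkseq (ham_seg b q) (2 * n + 2 * m)).
Proof.
move=> eb eq /andP[q2 qm] c1 c2 c3 c4.
have n1 := alt_param_gt1 pX; have m1 := alt_param_gt1 pY.
apply: (alt_cycle_mkseq (beta := true)); rewrite /ham_seg.
- lia.
- lia.
- by move=> i j; rewrite !inE => li lj; repeat case: ifP => ?; try lia; solve_inj.
- by move=> i li; repeat case: ifP => ?; try lia; split; first [solve_adj | solve_col].
- by rewrite /=; repeat case: ifP => ?; try lia; solve_adj.
- by rewrite /=; repeat case: ifP => ?; try lia; solve_col.
Qed.

Hypothesis sum_inv : sum_invariant (fun i j => col (X i) (Y j)).
Hypothesis nonconst : skew_nonconst (fun i j => col (X i) (Y j)) true.

Let h s := col (X s) (Y 0) (+) odd s.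

Lemma col_XY_h i j : odd (i + j) -> col (X i) (Y j) = h (i + j) (+) odd i.
Proof.
suff skewE : odd (i + j) -> col (X i) (Y j) (+) odd i = h (i + j).
  by move=> oij; rewrite -skewE // addbK.
elim: j i => [|j IH] i oij; first by rewrite addn0.
have := @sum_inv i j; rewrite /skew => ->; last lia.
by rewrite IH addSnnS //; lia.
Qed.

Lemma h_periodicX s : h (s + 2 * n) = h s.
Proof. by rewrite /h (alt_param_periodic pX); congr (_ (+) _); lia. Qed.

Lemma h_periodicY s : odd s -> h (s + 2 * m) = h s.
Proof.
move=> os; have := @col_XY_h 0 (s + 2 * m); have := @col_XY_h 0 s.
rewrite !add0n (alt_param_periodic pY) /= !addbF => <- // <- //; lia.
Qed.

Lemma h_periodic_gcd t s : odd s -> h (s + 2 * gcdn n m * t) = h s.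
Proof.
have n0 : 0 < n by have := alt_param_gt1 pX; lia.
apply: odd_periodicM => {}s os; have [a _ /dvdnP[K eK]] := Bezoutl m n0.
rewrite -(odd_periodicM h_periodicY a); last lia.
have -> : s + 2 * gcdn n m + 2 * m * a = s + 2 * n * K by lia.
elim: {eK}K => [|K IH]; first by rewrite muln0 addn0.
by rewrite mulnS addnCA addnC h_periodicX.
Qed.

Lemma h_drop : exists s, [/\ odd s, h s & ~~ h (s + 2)].
Proof.
have n0 : 0 < n by have := alt_param_gt1 pX; lia.
have hP s : odd s -> h (s + 2 * n) = h s by rewrite h_periodicX.
case: nonconst => i [j [i' [j' [o o']]]].
rewrite /skew !col_XY_h // !addbK.
case e: (h (i + j)) => ne.
  by apply: (odd_periodic_drop n0 hP o o'); rewrite // -(negbK (h _)) -e.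
by apply: (odd_periodic_drop n0 hP o' o); rewrite // ?e; move: ne; case: (h _).
Qed.

Lemma h_rise : exists s, [/\ odd s, ~~ h s & h (s + 2)].
Proof.
have n0 : 0 < n by have := alt_param_gt1 pX; lia.
have [s [os hs hs2]] := h_drop.
have hP x : odd x -> ~~ h (x + 2 * n) = ~~ h x by rewrite h_periodicX.
have os2 : odd (s + 2) by lia.
have [t [ot ht ht2]] := odd_periodic_drop n0 hP os2 os hs2 (introT negPn hs).
by exists t; rewrite -[h (t + 2)]negbK.
Qed.

Lemma short_cycle_through_X c k : 1 < k < n + m ->
  exists s, [/\ alt_cycle adj col s, size s = 2 * k & X c \in s].
Proof.
case/andP=> k1 km; have [sg [osg hsg hsg2]] := h_drop.
have [p [q [u [v [/andP[p0 pn] /andP[q0 qm] pq ec]]]]] :=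
  split_length (alt_param_gt1 pX) (alt_param_gt1 pY) k1 km.
set g := gcdn n m in ec.
have cpg : c + p <= g * (c + p).
  by rewrite leq_pmull // gcdn_gt0; have := alt_param_gt1 pX; lia.
pose b := sg + 2 * g * (c + p) - (c + p.-1).
have eb : c + p.-1 + b = sg + 2 * g * (c + p) by lia.
have eb2 : c + (b + q.-1) + 2 * g * u = sg + 2 + 2 * g * (c + p + v) by lia.
exists (mkseq (two_seg c b p) (p + q)); split.
- apply: two_seg_alt_cycle; rewrite ?p0 ?q0 //.
  + by rewrite eb; lia.
  + by rewrite col_XY_h ?eb ?h_periodic_gcd ?hsg //; lia.
  + lia.
  + rewrite col_XY_h; last lia.
    by rewrite -(h_periodic_gcd u) ?eb2 ?h_periodic_gcd ?(negbTE hsg2) //; lia.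
- by rewrite size_mkseq pq.
- have -> : X c = two_seg c b p 0 by rewrite /two_seg p0 addn0.
  by apply: map_f; rewrite mem_iota; lia.
Qed.

Lemma h_shift b s : ~~ odd b -> odd s ->
  exists d, [/\ odd d, d < 2 * m & forall e, ~~ odd e -> h (b + d + e) = h (s + e)].
Proof.
move=> eb os; have m0 : 0 < m by have := alt_param_gt1 pY; lia.
have bZ : b <= m * b by rewrite leq_pmull.
have [Z eZ] : exists Z, b + Z = s + 2 * m * b by exists (s + 2 * m * b - b); lia.
exists (Z %% (2 * m)).
have := divn_eq Z (2 * m); have : Z %% (2 * m) < 2 * m by rewrite ltn_pmod; lia.
move: (Z %/ (2 * m)) (Z %% (2 * m)) => K d d_lt eK; split=> //; first lia.
move=> e oe; rewrite -(odd_periodicM h_periodicY K); last lia.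
rewrite (_ : _ + _ = s + e + 2 * m * b); last lia.
by rewrite odd_periodicM //; [apply: h_periodicY | lia].
Qed.

Lemma ham_cycle_through_X c :
  exists s, [/\ alt_cycle adj col s, size s = 2 * (n + m) & X c \in s].
Proof.
have [sg [osg hsg hsg2]] := h_drop; have [tau [otau htau htau2]] := h_rise.
have n1 := alt_param_gt1 pX; have m1 := alt_param_gt1 pY.
have etau : ~~ odd tau.+1 by rewrite oddS otau.
have [d [d_odd d_lt hd]] := h_shift etau osg.
have hd0 : h (tau.+1 + d) by have := hd 0 isT; rewrite !addn0 => ->.
have hd2 : h (tau.+1 + d + 2) = false by rewrite hd // (negbTE hsg2).
have htau_m : h (tau + 2 * m) = false by rewrite h_periodicY // (negbTE htau).
have d_max : d != (2 * m).-1.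
  by apply: contraTneq hd0 => ->; rewrite (_ : _ + _ = tau + 2 * m) ?htau_m //; lia.
exists (mkseq (ham_seg tau.+1 d.+1) (2 * n + 2 * m)); split.
- apply: ham_seg_alt_cycle => //.
  + by rewrite oddS d_odd.
  + apply/andP; split; lia.
  + rewrite col_XY_h; last lia.
    by rewrite (_ : 1 + tau.+1 = tau + 2) ?htau2 //; lia.
  + rewrite col_XY_h; last lia.
    by rewrite (_ : 2 + (tau.+1 + d.+1.-1) = tau.+1 + d + 2) ?hd2 //; lia.
  + rewrite col_XY_h; last lia.
    rewrite (_ : (2 * n).-1 + (tau.+1 + d.+1) = tau.+1 + d + 2 * n); last lia.
    by rewrite h_periodicX hd0; lia.
  + rewrite col_XY_h; last lia.
    by rewrite (_ : 0 + (tau.+1 + (2 * m).-1) = tau + 2 * m) ?htau_m //; lia.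
- by rewrite size_mkseq; lia.
- rewrite -(alt_param_mod pX c); set c' := c %% (2 * n).
  have c'_lt : c' < 2 * n by rewrite ltn_pmod; lia.
  have [c'2|c'2] := ltnP c' 2.
    have -> : X c' = ham_seg tau.+1 d.+1 c' by rewrite /ham_seg c'2.
    by apply: map_f; rewrite mem_iota; lia.
  have -> : X c' = ham_seg tau.+1 d.+1 (c' + d.+1).
    have [lt1 lt2 lt3] : [/\ (c' + d.+1 < 2) = false, (c' + d.+1 < 2 + d.+1) = false
                         & c' + d.+1 < 2 * n + d.+1] by split; lia.
    by rewrite /ham_seg lt1 lt2 lt3 addnK.
  by apply: map_f; rewrite mem_iota; lia.
Qed.

Lemma cycle_through_X c k : 1 < k <= n + m ->
  exists s, [/\ alt_cycle adj col s, size s = 2 * k & X c \in s].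
Proof.
case/andP=> k1; rewrite leq_eqVlt => /orP[/eqP ->|km].
  exact: ham_cycle_through_X.
by apply: short_cycle_through_X; rewrite k1.
Qed.

End TwoCycles.

Section Assembly.
Variables (n m : nat) (X Y : nat -> V).
Hypotheses (pX : alt_param n X) (pY : alt_param m Y).
Hypothesis XY_neq : forall i j, X i != Y j.
Hypothesis XY_adj : forall i j, adj (X i) (Y j).

Lemma cycles_through_both :
  sum_invariant (fun i j => col (X i) (Y j)) ->
  skew_nonconst (fun i j => col (X i) (Y j)) true ->
  forall c k, 1 < k <= n + m ->
  (exists s, [/\ alt_cycle adj col s, size s = 2 * k & X c \in s]) /\
  (exists s, [/\ alt_cycle adj col s, size s = 2 * k & Y c \in s]).
Proof.
move=> inv nc c k kb; split; first exact: (cycle_through_X pX pY).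
have YX_neq i j : Y i != X j by rewrite eq_sym.
have YX_adj i j : adj (Y i) (X j) by rewrite adjC.
apply: (cycle_through_X pY pX YX_neq YX_adj); rewrite 1?addnC //.
- by apply: (sum_invariant_swap _ inv) => i j; rewrite colC.
- by apply: (skew_nonconst_swap _ nc) => i j; rewrite colC.
Qed.

Lemma skew_invariants_of_no_good_pair C1 C2 :
  (forall i, X i \in C1) -> (forall j, Y j \in C2) ->
  (forall i, next C1 (X i) = X i.+1 /\ prev C1 (X i) = X (i + (2 * n).-1)) ->
  (forall j, next C2 (Y j) = Y j.+1 /\ prev C2 (Y j) = Y (j + (2 * m).-1)) ->
  ~ has_good_pair col C1 C2 ->
  sum_invariant (fun i j => col (X i) (Y j)) /\
  diff_invariant (fun i j => col (X i) (Y j)).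
Proof.
move=> XC YC Xnb Ynb ngp.
have n0 : 0 < n by have := alt_param_gt1 pX; lia.
have m0 : 0 < m by have := alt_param_gt1 pY; lia.
apply: (@diagonal_invariants _ n m) => // [i j t u|i j fij|i j fij].
- by rewrite (alt_param_periodicM pX) (alt_param_periodicM pY).
- apply/negP => fr; apply: ngp; exists (X i), (Y j); split=> //.
  by rewrite fij (cnbr_alt_param pX) // (cnbr_alt_param pY).
- apply/negPn/negP => fb; apply: ngp; exists (X i), (Y j); split=> //.
  by rewrite (negbTE fij) (cnbr_alt_param pX) // (cnbr_alt_param pY) // (negbTE fb).
Qed.

Lemma orient_second_cycle :
  sum_invariant (fun i j => col (X i) (Y j)) ->
  diff_invariant (fun i j => col (X i) (Y j)) ->
  (exists i j j', col (X i) (Y j) != col (X i) (Y j')) ->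
  (exists j i i', col (Y j) (X i) != col (Y j) (X i')) ->
  exists rho, [/\ alt_param m (fun j => Y (rho j)),
    forall j, exists j', Y (rho j') = Y j,
    sum_invariant (fun i j => col (X i) (Y (rho j))) &
    skew_nonconst (fun i j => col (X i) (Y (rho j))) true].
Proof.
move=> sum_inv diff_inv [i [j [j' nsX]]] [j0 [i0 [i0' nsY]]].
have m0 : 0 < m by have := alt_param_gt1 pY; lia.
have colP i1 j1 u : col (X i1) (Y (j1 + 2 * m * u)) = col (X i1) (Y j1).
  by rewrite (alt_param_periodicM pY).
case: (classic (skew_nonconst (fun i j => col (X i) (Y j)) true)) => [nc|nc_odd].
  by exists id; split=> // j1; exists j1.
case: (classic (skew_nonconst (fun i j => col (X i) (Y j)) false)) => [nc|nc_even].
  exists (rev_idx m); split.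
  - exact: alt_param_rev.
  - by move=> j1; exists (rev_idx m j1); rewrite rev_idxK // (alt_param_periodicM pY).
  - exact: (@sum_invariant_rev m (fun i j => col (X i) (Y j)) m0 colP diff_inv).
  - exact: (@skew_nonconst_rev m (fun i j => col (X i) (Y j)) m0 colP nc).
case: (skew_const_or_singular nc_odd nc_even) => sing.
- by move: nsX; rewrite (sing i j j') eqxx.
- by move: nsY; rewrite !(colC (Y j0)) (sing i0 i0' j0) eqxx.
Qed.

End Assembly.

End AltCycles.

Theorem theorem3p13 (V : finType) (adj : rel V) (col : V -> V -> bool)
    (C1 C2 : seq V) :
  simple_2ec_graph adj col ->
  [disjoint C1 & C2] ->
  (forall x : V, (x \in C1) || (x \in C2)) ->
  (forall u w, u \in C1 -> w \in C2 -> adj u w) ->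
  alt_cycle adj col C1 -> alt_cycle adj col C2 ->
  ~ has_good_pair col C1 C2 ->
  (exists v, v \in C1 /\ non_singular col v C2) ->
  (exists v, v \in C2 /\ non_singular col v C1) ->
  vertex_alt_pancyclic adj col.
Proof.
move=> [_ [adjC colC]] disj cov C12_adj A1 A2 no_good [v1 [v1C ns1]] [v2 [v2C ns2]].
have [n [X [pX sX XC Xonto Xnb]]] := alt_param_of_cycle colC A1.
have [m [Y [pY sY YC Yonto Ynb]]] := alt_param_of_cycle colC A2.
have XY_neq i j : X i != Y j by apply: contraTneq (XC i) => ->; rewrite (disjointFl disj).
have XY_adj i j : adj (X i) (Y j) by apply: C12_adj.
have [sum_inv diff_inv] :=
  skew_invariants_of_no_good_pair pX pY XC YC Xnb Ynb no_good.
have [rho [pZ Zonto Zsum Znc]] := orient_second_cycle adjC colC pY sum_inv diff_inv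
  (non_singular_param Xonto Yonto v1C ns1) (non_singular_param Yonto Xonto v2C ns2).
have cycles c k := cycles_through_both adjC colC pX pZ (fun i j => XY_neq i (rho j))
  (fun i j => XY_adj i (rho j)) Zsum Znc c (k := k).
move=> v k k2 kV; have kb : 1 < k <= n + m.
  move: kV; rewrite (card_cover2 _ _ disj cov) ?sX ?sY; first lia.
    by case/and4P: A1.
  by case/and4P: A2.
case/orP: (cov v) => [/Xonto [c <-] | /Yonto [c <-]]; first by case: (cycles c k kb).
by have [c' <-] := Zonto c; case: (cycles c' k kb).
Qed.
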